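(* Let $\alpha$ be a composition and let $\lambda$ be the partition obtained by sorting the parts of $\alpha$ into weakly decreasing order. Then the fundamental quasi-symmetric function $F_\alpha$ occurs (with positive coefficient) in the expansion of the Schur function $s_\lambda$ in the basis of fundamental quasi-symmetric functions.
   Context: For a composition $\alpha$, $F_\alpha=\sum_{\beta}M_\beta$, summed over compositions $\beta$ refining $\alpha$, where $M_\beta=\sum_{i_1<\dots<i_k}x_{i_1}^{\beta_1}\cdots x_{i_k}^{\beta_k}$ for $\beta=(\beta_1,\dots,\beta_k)$. For a partition $\lambda$, $s_\lambda=\sum_T x^T$ over semistandard Young tableaux $T$ of shape $\lambda$ (rows weakly increasing, columns strictly increasing, entries positive integers), with $x^T=\prod_a x_a^{(\text{number of } a \text{ in } T)}$. The fundamental quasi-symmetric functions form a basis of the ring of quasi-symmetric functions, and $s_\lambda=\sum_{S}F_{\mathrm{Des}(S)}$ over standard Young tableaux $S$ of shape $\lambda$, where for $S$ with $N$ cells and descent set $\{i_1<\dots<i_k\}$ (the entries $i$ such that $i+1$ lies in a strictly lower row) $\mathrm{Des}(S)=(i_1,i_2-i_1,\dots,N-i_k)$. *)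

From mathcomp Require Import all_boot.
Set Implicit Arguments. Unset Strict Implicit. Unset Printing Implicit Defensive.

Definition is_composition (a : seq nat) : bool := all (fun x => 0 < x) a.

Definition sort_partition (a : seq nat) : seq nat := sort (fun m n => n <= m) a.

(* Tableaux: a list of rows (English convention, row 0 on top);
   "lower row" = larger row index. *)
Definition shape (t : seq (seq nat)) : seq nat := map size t.

Definition rows_increasing (t : seq (seq nat)) : bool :=
  all (fun r => sorted ltn r) t.

Definition cols_increasing (t : seq (seq nat)) : bool :=
  all (fun i => all (fun j => nth 0 (nth [::] t i) j < nth 0 (nth [::] t i.+1) j)
                    (iota 0 (size (nth [::] t i.+1))))
      (iota 0 (size t)).

Definition is_SYT (lam : seq nat) (t : seq (seq nat)) : bool :=
  [&& shape t == lam, perm_eq (flatten t) (iota 1 (sumn lam)),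
      rows_increasing t & cols_increasing t].

(* Explicit finite list of all SYT of shape lam (each listed once). *)
Definition SYT_list (lam : seq nat) : seq (seq (seq nat)) :=
  [seq t <- [seq reshape lam s | s <- permutations (iota 1 (sumn lam))] | is_SYT lam t].

Definition row_of (t : seq (seq nat)) (k : nat) : nat := find (fun r => k \in r) t.

Definition descents (t : seq (seq nat)) : seq nat :=
  [seq i <- iota 1 (sumn (shape t)).-1 | row_of t i < row_of t i.+1].

Definition set_to_comp (N : nat) (D : seq nat) : seq nat :=
  if N is 0 then [::]
  else [seq p.2 - p.1 | p <- zip (0 :: D) (rcons D N)].

Definition Des (t : seq (seq nat)) : seq nat :=
  set_to_comp (sumn (shape t)) (descents t).

(* Coefficient of F_alpha in s_lam = sum_{S SYT of shape lam} F_{Des S}. *)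
Definition coeff_F_in_schur (lam alpha : seq nat) : nat :=
  count (fun t => Des t == alpha) (SYT_list lam).

From mathcomp Require Import all_boot zify.
Set Implicit Arguments. Unset Strict Implicit. Unset Printing Implicit Defensive.

(* Insert the parts of alpha one at a time. Sorting a prefix of alpha and appending the next
   part m enlarges the sorted partition by a horizontal strip of m cells, one of which starts a
   new bottom row. Record every cell of the strip by its row index, reading the strip from its
   lowest row up, and concatenate these blocks: the result is a lattice (Yamanouchi) word, i.e.
   the list of the rows of the entries 1, 2, ... of a standard Young tableau of shape
   sort_partition alpha. Each block is weakly decreasing and starts with a letter (the new
   bottom row) larger than every earlier letter, so the ascents of the word, which are the
   descents of the tableau, are exactly the partial sums of alpha: the descent composition of
   the tableau is alpha itself. *)

Lemma geq_trans : transitive geq.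
Proof. exact: rev_trans leq_trans. Qed.

Lemma geq_total : total geq.
Proof. by move=> m n; rewrite /= orbC leq_total. Qed.

Lemma count_rcons (T : Type) (P : pred T) s x : count P (rcons s x) = count P s + P x.
Proof. by rewrite -cats1 count_cat /= addn0. Qed.

Lemma iota_rcons m n : iota m n.+1 = rcons (iota m n) (m + n).
Proof. by rewrite -addn1 iotaD cats1. Qed.

Lemma index_iota0 j k : j < k -> index j (iota 0 k) = j.
Proof.
by move=> j_lt; rewrite -{1}(add0n j) -(nth_iota 0 0 j_lt) index_uniq ?size_iota ?iota_uniq.
Qed.

Lemma sumn_nth s n : size s <= n -> sumn s = \sum_(r < n) nth 0 s r.
Proof.
elim: s n => [|x s IHs] [|n] //= size_le; first by rewrite big_ord0.
  by rewrite big1 // => r; rewrite nth_nil.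
by rewrite big_ord_recl (IHs n).
Qed.

Lemma sorted_geq_nth_count (s : seq nat) r x : sorted geq s -> r < size s ->
  (x <= nth 0 s r) = (r < count (fun y => x <= y) s).
Proof.
elim: s r => [|a s IHs] r //=; rewrite (path_sortedE geq_trans) => /andP[a_ge s_sorted].
have [x_le_a|a_lt_x] := leqP x a.
  by case: r => [|r] //=; rewrite ltnS => r_lt; rewrite IHs // add1n ltnS.
have count0 : count (fun y => x <= y) s = 0.
  apply/eqP; rewrite -leqn0 leqNgt -has_count; apply/hasPn => y /(allP a_ge) y_le_a.
  by rewrite -ltnNge (leq_ltn_trans y_le_a a_lt_x).
case: r => [|r] /=; rewrite count0; first by rewrite [x <= a]leqNgt a_lt_x.
by rewrite ltnS => r_lt; rewrite IHs // count0.
Qed.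

Lemma perm_flatten_filter_eq (T : eqType) (g : T -> nat) (s : seq T) k :
  perm_eq (flatten [seq filter (fun x => g x == r) s | r <- iota 0 k])
          (filter (fun x => g x < k) s).
Proof.
elim: k => [|k IHk]; first by rewrite /= (eq_filter (a2 := pred0)) ?filter_pred0.
rewrite iota_rcons map_rcons flatten_rcons (perm_catr _ IHk) add0n.
rewrite perm_sym -(perm_filterC (fun x => g x < k)) -!filter_predI.
have perm_eq_filter a1 a2 : a1 =1 a2 -> perm_eq (filter a1 s) (filter a2 s).
  by move=> eq_a; rewrite (eq_filter eq_a).
by apply: perm_cat; apply: perm_eq_filter => x /=; lia.
Qed.

Lemma nth_filter_iota_lt (P Q : pred nat) m N :
  (forall i, Q i -> ~~ P i) ->
  (forall n, n <= N -> count Q (iota m n) <= count P (iota m n)) ->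
  forall c, c < count Q (iota m N) ->
  nth 0 (filter P (iota m N)) c < nth 0 (filter Q (iota m N)) c.
Proof.
move=> QnP; elim: N => [|N IHN] ballot c //.
have {}IHN := IHN (fun n n_le => ballot n (leqW n_le)).
have := ballot N.+1 (leqnn _); have := ballot N (leqnSn _).
rewrite iota_rcons !count_rcons !filter_rcons.
have P_lt d : d < count P (iota m N) -> nth 0 (filter P (iota m N)) d < m + N.
  move=> d_lt; have : nth 0 (filter P (iota m N)) d \in filter P (iota m N).
    by rewrite mem_nth // size_filter.
  by rewrite mem_filter mem_iota => /and3P[].
case QN: (Q (m + N)); last first.
  rewrite addn0 => ballotN _ c_lt; case: (P (m + N)); last exact: IHN.
  by rewrite nth_rcons size_filter ifT ?IHN //; lia.
rewrite (negbTE (QnP _ QN)) /= addn0 => ballotN ballotN1 c_lt.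
rewrite nth_rcons size_filter.
case: (ltnP c (count Q (iota m N))) => [c_ltQ|c_geQ]; first exact: IHN.
have -> : c = count Q (iota m N) by lia.
by rewrite eqxx P_lt //; lia.
Qed.

Lemma set_to_comp_rcons n m D : 0 < n ->
  set_to_comp (n + m) (rcons D n) = rcons (set_to_comp n D) m.
Proof.
case: n => [|n] // _; rewrite addSn /set_to_comp -rcons_cons zip_rcons ?size_rcons //.
by rewrite map_rcons /= -addSn addKn.
Qed.

Fixpoint decr_word (f : nat -> nat) (K : nat) : seq nat :=
  if K is K'.+1 then nseq (f K') K' ++ decr_word f K' else [::].

Lemma count_decr_word f K r : count_mem r (decr_word f K) = if r < K then f r else 0.
Proof.
elim: K => [|K IHK] //=; rewrite count_cat count_nseq IHK /= eq_sym ltnS.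
by case: (ltngtP r K) => [_|_|->]; rewrite ?mul0n ?mul1n ?addn0.
Qed.

Lemma size_decr_word f K : size (decr_word f K) = \sum_(r < K) f r.
Proof.
by elim: K => [|K IHK]; rewrite ?big_ord0 // big_ord_recr /= size_cat size_nseq IHK addnC.
Qed.

Lemma decr_word_path f K x : K <= x.+1 -> path geq x (decr_word f K).
Proof.
elim: K x => [|K IHK] x //= K_lt.
elim: (f K) x K_lt => [|n IHn] x /= K_lt; first exact/IHK/ltnW.
by rewrite -ltnS K_lt /= IHn.
Qed.

Lemma decr_word_sorted f K : sorted geq (decr_word f K).
Proof. exact: path_sorted (decr_word_path f (leqnSn K)). Qed.

(** * Tableaux of lattice words *)

Definition lattice_word (w : seq nat) : Prop :=
  forall n r, count_mem r.+1 (take n w) <= count_mem r (take n w).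

(* The hypothesis says that the content of [w ++ B] is obtained from that of [w] by adding a
   horizontal strip; the order of the letters of [B] is then irrelevant. *)
Lemma lattice_word_cat w B : lattice_word w ->
  (forall r, count_mem r.+1 (w ++ B) <= count_mem r w) -> lattice_word (w ++ B).
Proof.
move=> w_lattice strip n r; rewrite take_cat; case: ltnP => [_|_]; first exact: w_lattice.
have prefix_le := leq_count_subseq (pred1 r.+1)
  (cat_subseq (subseq_refl w) (take_subseq B (n - size w))).
by rewrite [count_mem r _]count_cat (leq_trans prefix_le) ?(leq_trans (strip r)) ?leq_addr.
Qed.

(* Positions are numbered from 1 like the entries of [word_tableau w k], so that ascents of [w]
   become descents of the tableau. *)
Definition ascents (w : seq nat) : seq nat :=
  [seq i <- iota 1 (size w).-1 | nth 0 w i.-1 < nth 0 w i].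

Lemma ascents_cat w B : 0 < size w -> 0 < size B ->
  ascents (w ++ B) =
  ascents w ++ nseq (last 0 w < head 0 B) (size w) ++ [seq i + size w | i <- ascents B].
Proof.
move=> w_pos B_pos; have nth_right j : size w <= j -> nth 0 (w ++ B) j = nth 0 B (j - size w).
  by move=> j_ge; rewrite nth_cat ltnNge j_ge.
rewrite /ascents size_cat.
have -> : (size w + size B).-1 = (size w).-1 + (1 + (size B).-1) by lia.
rewrite !iotaD add1n prednK // filter_cat; congr (_ ++ _).
  apply: eq_in_filter => i; rewrite mem_iota => i_in.
  have [i_lt i1_lt] : i < size w /\ i.-1 < size w by lia.
  by rewrite !nth_cat i_lt i1_lt.
rewrite filter_cat /= (nth_right (size w)) // subnn nth0 nth_cat ltn_predL w_pos nth_last.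
congr (_ ++ _); first by case: (last 0 w < head 0 B).
rewrite iotaDl filter_map (eq_map (addnC (size w))); congr map.
apply: eq_in_filter => i; rewrite mem_iota /= => i_in.
by rewrite !nth_right ?addKn; try congr (nth 0 B _ < _); lia.
Qed.

Lemma ascents_nonincreasing B : sorted geq B -> ascents B = [::].
Proof.
move=> B_sorted; rewrite /ascents (eq_in_filter (a2 := pred0)) ?filter_pred0 // => i.
rewrite mem_iota => i_in; apply/negbTE; rewrite -leqNgt.
by apply: (sorted_leq_nth geq_trans leqnn) => //; rewrite ?inE /=; lia.
Qed.

(* Entry [i + 1] of [word_tableau w k] goes to row [w_i]; entries with [w_i >= k] are dropped. *)
Definition word_row (w : seq nat) (r : nat) : seq nat :=
  [seq i <- iota 1 (size w) | nth 0 w i.-1 == r].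

Definition word_tableau (w : seq nat) (k : nat) : seq (seq nat) := mkseq (word_row w) k.

Lemma count_iota_nth_eq w n r : n <= size w ->
  count (fun i => nth 0 w i.-1 == r) (iota 1 n) = count_mem r (take n w).
Proof.
elim: n => [|n IHn] n_lt; first by rewrite take0.
by rewrite iota_rcons count_rcons (take_nth 0 n_lt) count_rcons IHn 1?ltnW.
Qed.

Lemma size_word_row w r : size (word_row w r) = count_mem r w.
Proof. by rewrite size_filter count_iota_nth_eq ?take_size. Qed.

Lemma shape_word_tableau w k :
  shape (word_tableau w k) = mkseq (fun r => count_mem r w) k.
Proof.
by rewrite /shape /word_tableau /mkseq -map_comp; apply: eq_map => r /=; rewrite size_word_row.
Qed.

Lemma perm_flatten_word_tableau w k : all (fun x => x < k) w ->
  perm_eq (flatten (word_tableau w k)) (iota 1 (size w)).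
Proof.
move=> w_lt; have := perm_flatten_filter_eq (fun i => nth 0 w i.-1) (iota 1 (size w)) k.
rewrite (all_filterP _) //; apply/allP => -[|i]; rewrite mem_iota // add1n ltnS => i_lt.
exact/(allP w_lt)/mem_nth.
Qed.

Lemma rows_increasing_word_tableau w k : rows_increasing (word_tableau w k).
Proof.
by apply/allP => _ /mapP[r _ ->]; apply: sorted_filter; [exact: ltn_trans | exact: iota_ltn_sorted].
Qed.

Lemma cols_increasing_word_tableau w k : lattice_word w -> cols_increasing (word_tableau w k).
Proof.
move=> w_lattice; apply/allP => r _; apply/allP => j; rewrite mem_iota add0n => j_lt.
have [r1_lt|r1_ge] := ltnP r.+1 k; last first.
  by move: j_lt; rewrite nth_default ?size_mkseq.
have r_lt : r < k by exact: ltnW.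
rewrite /word_tableau !nth_mkseq // in j_lt *; rewrite size_word_row in j_lt.
apply: nth_filter_iota_lt.
- by move=> i /eqP ->; rewrite eq_sym ltn_eqF.
- by move=> n n_le; rewrite !count_iota_nth_eq.
- by rewrite count_iota_nth_eq ?take_size.
Qed.

Lemma row_of_word_tableau w k i : all (fun x => x < k) w -> i < size w ->
  row_of (word_tableau w k) i.+1 = nth 0 w i.
Proof.
move=> w_lt i_lt; have wi_lt : nth 0 w i < k by apply: (allP w_lt); rewrite mem_nth.
rewrite /row_of /word_tableau /mkseq find_map.
rewrite (eq_find (a2 := pred1 (nth 0 w i))) => [|r]; last first.
  by rewrite /= mem_filter mem_iota add1n !ltnS i_lt /= andbT eq_sym.
exact: index_iota0.
Qed.

Lemma sumn_shape_word_tableau w k : all (fun x => x < k) w ->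
  sumn (shape (word_tableau w k)) = size w.
Proof.
by move=> w_lt; rewrite -size_flatten (perm_size (perm_flatten_word_tableau w_lt)) size_iota.
Qed.

Lemma word_tableau_SYT w k : lattice_word w -> all (fun x => x < k) w ->
  is_SYT (mkseq (fun r => count_mem r w) k) (word_tableau w k).
Proof.
move=> w_lattice w_lt; rewrite /is_SYT -shape_word_tableau eqxx sumn_shape_word_tableau //.
by rewrite perm_flatten_word_tableau // rows_increasing_word_tableau cols_increasing_word_tableau.
Qed.

Lemma Des_word_tableau w k : all (fun x => x < k) w ->
  Des (word_tableau w k) = set_to_comp (size w) (ascents w).
Proof.
move=> w_lt; rewrite /Des /descents sumn_shape_word_tableau //; congr set_to_comp.
apply: eq_in_filter => -[|i]; rewrite mem_iota // => i_in.
by rewrite !row_of_word_tableau //; lia.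
Qed.

Lemma mem_SYT_list lam t : (t \in SYT_list lam) = is_SYT lam t.
Proof.
rewrite mem_filter andb_idr // => /and4P[/eqP t_shape t_perm _ _].
apply/mapP; exists (flatten t); first by rewrite mem_permutations.
by rewrite -t_shape flattenK.
Qed.

Lemma coeff_F_in_schur_gt0 lam alpha t :
  is_SYT lam t -> Des t = alpha -> 0 < coeff_F_in_schur lam alpha.
Proof.
move=> t_SYT t_Des; rewrite /coeff_F_in_schur -has_count; apply/hasP.
by exists t; rewrite ?mem_SYT_list ?t_Des.
Qed.

(** * Sorting a composition *)

Lemma sort_partition_sorted a : sorted geq (sort_partition a).
Proof. exact: (sort_sorted geq_total). Qed.

Lemma perm_sort_partition a : perm_eq (sort_partition a) a.
Proof. by rewrite /sort_partition perm_sort. Qed.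

Lemma count_sort_partition (P : pred nat) a : count P (sort_partition a) = count P a.
Proof. exact/permP/perm_sort_partition. Qed.

Lemma size_sort_partition a : size (sort_partition a) = size a.
Proof. exact: size_sort. Qed.

Lemma sumn_sort_partition a : sumn (sort_partition a) = sumn a.
Proof. exact/perm_sumn/perm_sort_partition. Qed.

Lemma nth_sort_partition_count a r x : r < size a ->
  (x <= nth 0 (sort_partition a) r) = (r < count (fun y => x <= y) a).
Proof.
by move=> r_lt; rewrite sorted_geq_nth_count ?sort_partition_sorted ?size_sort_partition
  ?count_sort_partition.
Qed.

Lemma nth_sort_partition_gt0 a r : is_composition a -> r < size a ->
  0 < nth 0 (sort_partition a) r.
Proof.
rewrite /is_composition all_count => /eqP count_pos r_lt.
by rewrite nth_sort_partition_count // count_pos.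
Qed.

Lemma sort_partition_rcons_ge a m r :
  nth 0 (sort_partition a) r <= nth 0 (sort_partition (rcons a m)) r.
Proof.
have [r_lt|r_ge] := ltnP r (size a); last by rewrite nth_default ?size_sort_partition.
set x := nth 0 (sort_partition a) r.
have : r < count (fun y => x <= y) a by rewrite -nth_sort_partition_count.
by rewrite nth_sort_partition_count ?size_rcons ?count_rcons; lia.
Qed.

Lemma sort_partition_rcons_interlace a m r :
  nth 0 (sort_partition (rcons a m)) r.+1 <= nth 0 (sort_partition a) r.
Proof.
have [r_lt|r_ge] := ltnP r (size a); last first.
  by rewrite nth_default ?size_sort_partition ?size_rcons.
set x := nth 0 (sort_partition (rcons a m)) r.+1.
have : r.+1 < count (fun y => x <= y) (rcons a m).
  by rewrite -nth_sort_partition_count ?size_rcons.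
by rewrite count_rcons nth_sort_partition_count //; case: (x <= m) => /=; lia.
Qed.

(** * The Yamanouchi word of a composition *)

(* The cells of the horizontal strip [sort_partition (rcons a m) / sort_partition a], each
   recorded by its row, lowest row first. *)
Definition strip_word (a : seq nat) (m : nat) : seq nat :=
  decr_word (fun r => nth 0 (sort_partition (rcons a m)) r - nth 0 (sort_partition a) r)
            (size a).+1.

Lemma count_strip_word a m r :
  count_mem r (strip_word a m) =
  nth 0 (sort_partition (rcons a m)) r - nth 0 (sort_partition a) r.
Proof.
rewrite count_decr_word; case: ltnP => // r_ge.
by rewrite !nth_default ?size_sort_partition ?size_rcons // ltnW.
Qed.

Lemma size_strip_word a m : size (strip_word a m) = m.
Proof.
set lam := sort_partition a; set lam' := sort_partition (rcons a m).
have grow r : nth 0 lam r <= nth 0 lam' r := sort_partition_rcons_ge a m r.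
have sum_lam : sumn a = \sum_(r < (size a).+1) nth 0 lam r.
  by rewrite -sumn_sort_partition (@sumn_nth _ (size a).+1) ?size_sort_partition.
have sum_lam' : sumn a + m = \sum_(r < (size a).+1) nth 0 lam' r.
  by rewrite -sumn_rcons -sumn_sort_partition (@sumn_nth _ (size a).+1)
    ?size_sort_partition ?size_rcons.
have split_sum : \sum_(r < (size a).+1) (nth 0 lam' r - nth 0 lam r)
    + \sum_(r < (size a).+1) nth 0 lam r = \sum_(r < (size a).+1) nth 0 lam' r.
  by rewrite -big_split; apply: eq_bigr => r _; apply: subnK.
rewrite /strip_word size_decr_word -/lam -/lam'; lia.
Qed.

Lemma head_strip_word a m : is_composition (rcons a m) -> head 0 (strip_word a m) = size a.
Proof.
move=> am_pos; have := nth_sort_partition_gt0 am_pos (_ : size a < size (rcons a m)).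
rewrite size_rcons => /(_ (ltnSn _)); rewrite /strip_word /=.
rewrite [nth 0 (sort_partition a) _]nth_default ?size_sort_partition // subn0.
by case: (nth 0 (sort_partition (rcons a m)) (size a)).
Qed.

Lemma ascents_strip_word a m : ascents (strip_word a m) = [::].
Proof. exact/ascents_nonincreasing/decr_word_sorted. Qed.

Definition yamanouchi_word (alpha : seq nat) : seq nat :=
  flatten (mkseq (fun i => strip_word (take i alpha) (nth 0 alpha i)) (size alpha)).

Lemma yamanouchi_word_rcons a m :
  yamanouchi_word (rcons a m) = yamanouchi_word a ++ strip_word a m.
Proof.
rewrite /yamanouchi_word size_rcons mkseqS flatten_rcons -cats1 take_size_cat //.
rewrite nth_cat ltnn subnn /mkseq; congr (flatten _ ++ _); apply/eq_in_map => i.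
by rewrite mem_iota => /andP[_ i_lt]; rewrite take_cat nth_cat i_lt.
Qed.

Lemma count_yamanouchi_word a r :
  count_mem r (yamanouchi_word a) = nth 0 (sort_partition a) r.
Proof.
elim/last_ind: a => [|a m IHa]; first by rewrite nth_nil.
by rewrite yamanouchi_word_rcons count_cat IHa count_strip_word subnKC ?sort_partition_rcons_ge.
Qed.

Lemma size_yamanouchi_word a : size (yamanouchi_word a) = sumn a.
Proof.
elim/last_ind: a => [|a m IHa] //.
by rewrite yamanouchi_word_rcons size_cat IHa size_strip_word sumn_rcons.
Qed.

Lemma yamanouchi_word_lt a : all (fun x => x < size a) (yamanouchi_word a).
Proof.
apply/allP => x; rewrite -has_pred1 has_count count_yamanouchi_word.
by apply: contraLR; rewrite -leqNgt => size_le; rewrite nth_default ?size_sort_partition.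
Qed.

Lemma lattice_yamanouchi_word a : lattice_word (yamanouchi_word a).
Proof.
elim/last_ind: a => [|a m IHa]; first by move=> n r; case: n.
rewrite yamanouchi_word_rcons; apply: lattice_word_cat => // r.
by rewrite -yamanouchi_word_rcons !count_yamanouchi_word sort_partition_rcons_interlace.
Qed.

Lemma set_to_comp_ascents_yamanouchi_word a : is_composition a ->
  set_to_comp (sumn a) (ascents (yamanouchi_word a)) = a.
Proof.
elim/last_ind: a => [|a m IHa] // am_pos.
have /andP[m_pos a_pos] : (0 < m) && is_composition a by rewrite -all_rcons.
rewrite yamanouchi_word_rcons sumn_rcons.
have [a_sum0|a_sum_pos] := posnP (sumn a).
  have -> : a = [::] by rewrite -(IHa a_pos) a_sum0.
  by rewrite /= ascents_strip_word; case: m {am_pos IHa} m_pos.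
have w_size := size_yamanouchi_word a.
have last_lt : last 0 (yamanouchi_word a) < size a.
  apply: (allP (yamanouchi_word_lt a)).
  by rewrite -nth_last mem_nth // ltn_predL w_size.
rewrite ascents_cat ?size_strip_word ?w_size // ascents_strip_word head_strip_word // last_lt.
by rewrite cats0 cats1 set_to_comp_rcons // IHa.
Qed.

Theorem theorem6p1 (alpha : seq nat) :
  is_composition alpha ->
  0 < coeff_F_in_schur (sort_partition alpha) alpha.
Proof.
move=> alpha_pos; set w := yamanouchi_word alpha.
have w_lt : all (fun x => x < size alpha) w := yamanouchi_word_lt alpha.
have content_w : mkseq (fun r => count_mem r w) (size alpha) = sort_partition alpha.
  rewrite -[RHS](mkseq_nth 0) size_sort_partition.
  by apply: eq_mkseq => r; exact: count_yamanouchi_word.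
apply: (@coeff_F_in_schur_gt0 _ _ (word_tableau w (size alpha))).
  by rewrite -content_w; apply: word_tableau_SYT => //; exact: lattice_yamanouchi_word.
by rewrite Des_word_tableau // size_yamanouchi_word set_to_comp_ascents_yamanouchi_word.
Qed.
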